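(* Let $k,m$ be integers with $k\ge 2$, $m\ge 3k+8$ and $m\equiv k \pmod 2$. Let $a=(3m+k)/2$ and $S=\langle m,a,a+1\rangle_{4m}$. Then $W_0(S)=-1$.
   Context: $\mathbb N=\{0,1,2,\dots\}$; $[x,y]=\{z\in\mathbb Z: x\le z\le y\}$. For positive integers $a_1,\dots,a_n,t$, $\langle a_1,\dots,a_n\rangle_t=(\mathbb N a_1+\dots+\mathbb N a_n)\cup\{z\in\mathbb Z: z\ge t\}$; this is a numerical semigroup. A numerical semigroup is a submonoid $S\subseteq\mathbb N$ with $\mathbb N\setminus S$ finite; multiplicity $m=\min(S\setminus\{0\})$; conductor $c=1+\max(\mathbb Z\setminus S)$; $q=\lceil c/m\rceil$, $\rho=qm-c$. Let $S^*=S\setminus\{0\}$, $D=S^*+S^*$, $P=S^*\setminus D$, $L=S\cap[0,c-1]$, $D_q=D\cap[c,c+m-1]$, and $W_0(S)=|P\cap L|\,|L|-q|D_q|+\rho$. *)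

From mathcomp Require Import all_boot all_order all_algebra.
Set Implicit Arguments. Unset Strict Implicit. Unset Printing Implicit Defensive.
Import GRing.Theory Num.Theory.

Fixpoint nat_comb (gs : seq nat) (x : nat) : bool :=
  match gs with
  | [::] => x == 0
  | g :: gs' => [exists i : 'I_(x.+1), (i * g <= x) && nat_comb gs' (x - i * g)]
  end.

(* <a_1,...,a_n>_t = (N a_1 + ... + N a_n) ∪ {z >= t} *)
Definition inS (gs : seq nat) (t x : nat) : bool := (t <= x) || nat_comb gs x.

Section Invariants.
Variables (gs : seq nat) (t : nat).
Let S := inS gs t.

Definition inSstar (x : nat) : bool := (0 < x) && S x.
(* multiplicity m = min (S \ {0}); requires t >= 1 to be meaningful *)
Definition mult : nat := (find inSstar (iota 1 t)).+1.
(* conductor c = 1 + max (Z \ S); all gaps lie below t; c = 0 iff S = N *)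
Definition conductor : nat := \max_(x < t | ~~ S x) x.+1.
Definition qq : nat := (conductor + mult - 1) %/ mult.
Definition rho : int := (qq * mult)%:Z - conductor%:Z.
Definition inD (x : nat) : bool :=
  [exists y : 'I_x.+1, inSstar y && inSstar (x - y)].
Definition inP (x : nat) : bool := inSstar x && ~~ inD x.
Definition cardL : nat := count S (iota 0 conductor).
Definition cardPL : nat := count inP (iota 0 conductor).
Definition cardDq : nat := count inD (iota conductor mult).
Definition W0 : int := (cardPL * cardL)%:Z - (qq * cardDq)%:Z + rho.
End Invariants.

From mathcomp Require Import all_boot all_order all_algebra.
From mathcomp Require Import zify.
Import GRing.Theory Num.Theory.

Set Implicit Arguments.
Unset Strict Implicit.
Unset Printing Implicit Defensive.

(* Below 4m the elements of S are the thirteen combinations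
   i m + j a + l (a + 1) listed in coeffs_L, and 4m - 1 is not one of them; so the
   multiplicity is m, the conductor is 4m, q = 4, rho = 0 and |L| = 13.  A
   combination of total degree at least 2 lies in D, whereas D starts at 2m, so the
   primitive elements below the conductor are exactly m, a, a + 1.  In the window
   [4m, 5m) the sums of two nonzero elements of L are the ten combinations of
   coeffs_Dq.  Hence W0(S) = 3 * 13 - 4 * 10 + 0 = -1. *)


Lemma nat_comb_consP g gs x :
  reflect (exists i, i * g <= x /\ nat_comb gs (x - i * g)) (nat_comb (g :: gs) x).
Proof.
apply: (iffP existsP) => [[i /andP[]]|[i [le_ig comb_rest]]]; first by exists i.
have [lt_ix | le_xi] := ltnP i x.+1; first by exists (Ordinal lt_ix); rewrite le_ig.
have g0 : g = 0 by apply/eqP; rewrite -leqn0; nia.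
by exists ord0; rewrite /= g0 !muln0 in comb_rest *.
Qed.

Lemma nat_comb3P g1 g2 g3 x :
  reflect (exists i j l, x = i * g1 + j * g2 + l * g3) (nat_comb [:: g1; g2; g3] x).
Proof.
apply: (iffP (nat_comb_consP _ _ _)).
  case=> i [? /nat_comb_consP [j [? /nat_comb_consP [l [? /eqP ?]]]]].
  by exists i, j, l; lia.
case=> i [j [l ->]]; exists i; split; first lia.
apply/nat_comb_consP; exists j; split; first lia.
by apply/nat_comb_consP; exists l; split; [lia | apply/eqP; lia].
Qed.

Lemma count_iota_eq_size (P : pred nat) lo n s : uniq s ->
  (forall x, lo <= x < lo + n -> P x = (x \in s)) ->
  {subset s <= [pred x | lo <= x < lo + n]} -> count P (iota lo n) = size s.
Proof.
move=> uniq_s P_s s_range; rewrite -size_filter; apply/perm_size/uniq_perm => //.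
  by rewrite filter_uniq ?iota_uniq.
move=> x; rewrite mem_filter mem_iota.
have [/P_s -> | out] := boolP (lo <= x < lo + n); first by rewrite andbT.
by rewrite andbF; apply/esym/negP => /s_range; apply/negP.
Qed.

Section Invariants.
Variables (gs : seq nat) (t : nat).
Local Notation S := (inS gs t).
Local Notation Sstar := (inSstar gs t).
Local Notation D := (inD gs t).

Lemma inDP x : reflect (exists y z, [/\ Sstar y, Sstar z & x = y + z]) (D x).
Proof.
apply: (iffP existsP) => [[y /andP[Sy Sz]]|[y [z [Sy Sz ->]]]].
  by exists y, (x - y); split => //; have := ltn_ord y; lia.
have lt_y : y < (y + z).+1 by lia.
by exists (Ordinal lt_y); rewrite /= Sy addKn.
Qed.

Lemma inD_ge n x : (forall y, Sstar y -> n <= y) -> D x -> 2 * n <= x.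
Proof. by move=> ge_n /inDP [y [z [/ge_n ? /ge_n ? ->]]]; lia. Qed.

Lemma mult_eq n : 0 < n <= t -> S n -> (forall x, 0 < x < n -> ~~ S x) ->
  mult gs t = n.
Proof.
move=> /andP[n0 nt] Sn notS; rewrite /mult.
case: findP => [/hasP []|i lt_i Si before].
  by exists n; rewrite ?mem_iota /inSstar ?n0 ?Sn //; lia.
rewrite size_iota in lt_i.
have /andP[_] := Si 0; rewrite nth_iota // add1n => S_i1.
have le_ni : n <= i.+1.
  by rewrite leqNgt; apply: contraL S_i1 => lt_in; apply: notS; lia.
apply/eqP; rewrite eqn_leq le_ni andbT ltnNge; apply/negP => lt_ni.
have lt_n1i : n.-1 < i by lia.
have := before 0 _ lt_n1i; rewrite nth_iota; last lia.
by rewrite add1n prednK // /inSstar n0 Sn.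
Qed.

Lemma conductor_eq : 0 < t -> ~~ S t.-1 -> conductor gs t = t.
Proof.
move=> t0 notS; apply/eqP; rewrite eqn_leq; apply/andP; split.
  by apply/bigmax_leqP => i _; exact: ltn_ord.
have lt_t1 : t.-1 < t by rewrite prednK.
by rewrite -{1}(prednK t0); apply: (leq_bigmax_cond (Ordinal lt_t1)).
Qed.

Lemma qq_eq q : 0 < mult gs t -> conductor gs t = q * mult gs t -> qq gs t = q.
Proof.
by move=> m0 c_eq; rewrite /qq c_eq -addnBA // divnMDl // divn_small ?addn0 // subn1 prednK.
Qed.

Lemma rho_eq0 q : 0 < mult gs t -> conductor gs t = q * mult gs t -> rho gs t = 0%R.
Proof. by move=> m0 c_eq; rewrite /rho (qq_eq m0 c_eq) c_eq subrr. Qed.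

End Invariants.

Section ThreeGenerators.
Variables (g1 g2 g3 t : nat).
Hypotheses (g1_gt0 : 0 < g1) (g2_gt0 : 0 < g2) (g3_gt0 : 0 < g3).
Local Notation gs := [:: g1; g2; g3].

Lemma inSstar_comb3 i j l : 0 < i + j + l -> inSstar gs t (i * g1 + j * g2 + l * g3).
Proof.
move=> deg_gt0; apply/andP; split; first nia.
by apply/orP; right; apply/nat_comb3P; exists i, j, l.
Qed.

Lemma inD_comb3 i j l : 1 < i + j + l -> inD gs t (i * g1 + j * g2 + l * g3).
Proof.
move=> deg_gt1; apply/inDP; case: i deg_gt1 => [|i] deg_gt1; last first.
  exists (1 * g1 + 0 * g2 + 0 * g3), (i * g1 + j * g2 + l * g3).
  by split; try apply: inSstar_comb3; lia.
case: j deg_gt1 => [|j] deg_gt1; last first.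
  exists (0 * g1 + 1 * g2 + 0 * g3), (0 * g1 + j * g2 + l * g3).
  by split; try apply: inSstar_comb3; lia.
exists (0 * g1 + 0 * g2 + 1 * g3), (0 * g1 + 0 * g2 + l.-1 * g3).
by split; try apply: inSstar_comb3; lia.
Qed.

Lemma inP_lt_mem x : x < t -> inP gs t x -> x \in gs.
Proof.
move=> lt_xt /andP[/andP[x_gt0 /orP[|/nat_comb3P [i [j [l def_x]]]]] notD]; first lia.
have [deg_gt1|deg_le1] := ltnP 1 (i + j + l).
  by rewrite def_x inD_comb3 in notD.
rewrite !inE {}def_x in x_gt0 *.
by case: i j l deg_le1 x_gt0 => [|[|i]] [|[|j]] [|[|l]]; lia.
Qed.

End ThreeGenerators.

Section ConsecutivePair.
Variables k m a : nat.
Hypotheses (twice_a : a * 2 = 3 * m + k) (k_ge2 : 2 <= k) (m_ge : 3 * k + 8 <= m).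
Local Notation gs := [:: m; a; a.+1].
Local Notation S := (inS gs (4 * m)).
Local Notation Sstar := (inSstar gs (4 * m)).
Local Notation D := (inD gs (4 * m)).

Definition comb (c : nat * nat * nat) : nat := c.1.1 * m + c.1.2 * a + c.2 * a.+1.

Definition coeffs_L : seq (nat * nat * nat) :=
  [:: (0, 0, 0); (1, 0, 0); (0, 1, 0); (0, 0, 1); (2, 0, 0); (1, 1, 0); (1, 0, 1);
      (3, 0, 0); (0, 2, 0); (0, 1, 1); (0, 0, 2); (2, 1, 0); (2, 0, 1)].

Definition coeffs_Dq : seq (nat * nat * nat) :=
  [:: (4, 0, 0); (1, 2, 0); (1, 1, 1); (1, 0, 2); (3, 1, 0); (3, 0, 1);
      (0, 3, 0); (0, 2, 1); (0, 1, 2); (0, 0, 3)].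

Lemma m_gt0 : 0 < m. Proof. lia. Qed.

Lemma a_gt0 : 0 < a. Proof. lia. Qed.

Lemma inS_lt4m x : x < 4 * m -> S x = (x \in map comb coeffs_L).
Proof.
move=> lt_x4m; apply/idP/mapP => [|[c _ ->]]; last first.
  by apply/orP; right; apply/nat_comb3P; exists c.1.1, c.1.2, c.2.
case/orP => [|/nat_comb3P [i [j [l def_x]]]]; first lia.
exists (i, j, l) => //; rewrite {x}def_x in lt_x4m.
have [i_le3 j_le2 l_le2] : [/\ i <= 3, j <= 2 & l <= 2] by split; nia.
(* each remaining triple either lies in coeffs_L or gives a value >= 4m *)
by case: i j l i_le3 j_le2 l_le2 lt_x4m
  => [|[|[|[|i]]]] // [|[|[|j]]] // [|[|[|l]]] //; lia.
Qed.

Lemma uniq_comb_L : uniq (map comb coeffs_L).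
Proof. by apply: (sorted_uniq ltn_trans ltnn); rewrite /= /comb /=; lia. Qed.

Lemma uniq_comb_Dq : uniq (map comb coeffs_Dq).
Proof. by apply: (sorted_uniq ltn_trans ltnn); rewrite /= /comb /=; lia. Qed.

Lemma inSstar_ge x : Sstar x -> m <= x.
Proof.
case/andP=> x_gt0; have [lt_x4m|] := ltnP x (4 * m); last lia.
by rewrite inS_lt4m //= /comb !inE /=; lia.
Qed.

Lemma mult_gens : mult gs (4 * m) = m.
Proof.
apply: mult_eq => [||x /andP[x_gt0 lt_xm]]; first lia.
  by rewrite inS_lt4m /= /comb ?inE /=; lia.
by apply: contraTN lt_xm => Sx; rewrite -leqNgt inSstar_ge // /inSstar x_gt0.
Qed.

Lemma conductor_gens : conductor gs (4 * m) = 4 * m.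
Proof. by apply: conductor_eq; rewrite ?inS_lt4m /= /comb ?inE /=; lia. Qed.

Lemma qq_gens : qq gs (4 * m) = 4.
Proof. by apply: qq_eq; rewrite mult_gens ?conductor_gens //; lia. Qed.

Lemma rho_gens : rho gs (4 * m) = 0%R.
Proof. by apply: (rho_eq0 (q := 4)); rewrite mult_gens ?conductor_gens //; lia. Qed.

Lemma cardL_gens : cardL gs (4 * m) = 13.
Proof.
rewrite /cardL conductor_gens (count_iota_eq_size (s := map comb coeffs_L)) //.
- exact: uniq_comb_L.
- by move=> x /andP[_ lt_x4m]; rewrite inS_lt4m.
- by move=> x; rewrite /= /comb !inE /=; lia.
Qed.

Lemma cardPL_gens : cardPL gs (4 * m) = 3.
Proof.
rewrite /cardPL conductor_gens (count_iota_eq_size (s := gs)) //.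
- by rewrite /= !inE; lia.
- move=> x /andP[_ lt_x4m]; apply/idP/idP => [|gen_x].
    exact: (inP_lt_mem m_gt0 a_gt0 (ltn0Sn a)).
  have Sstar_x : Sstar x.
    by move: gen_x; rewrite /inSstar inS_lt4m // /= /comb !inE /=; lia.
  rewrite /inP Sstar_x; apply: contraTN gen_x => /(inD_ge inSstar_ge).
  by rewrite !inE; lia.
- by move=> x; rewrite !inE; lia.
Qed.

Lemma cardDq_gens : cardDq gs (4 * m) = 10.
Proof.
rewrite /cardDq conductor_gens mult_gens.
rewrite (count_iota_eq_size (s := map comb coeffs_Dq)) //.
- exact: uniq_comb_Dq.
- move=> x /andP[ge_x4m lt_x5m]; apply/idP/idP => [|/mapP[c c_Dq ->]]; last first.
    rewrite /comb; apply: (inD_comb3 _ m_gt0 a_gt0 (ltn0Sn a)).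
    by move: c c_Dq; apply/allP.
  case/inDP=> y [z [Sy Sz def_x]].
  have [lt_y4m lt_z4m] : y < 4 * m /\ z < 4 * m.
    by have := inSstar_ge Sy; have := inSstar_ge Sz; lia.
  by move: Sy Sz; rewrite /inSstar !inS_lt4m // /= /comb !inE /=; lia.
- by move=> x; rewrite /= /comb !inE /=; lia.
Qed.

Lemma W0_gens : W0 gs (4 * m) = (-1)%R.
Proof. by rewrite /W0 cardPL_gens cardL_gens qq_gens cardDq_gens rho_gens. Qed.

End ConsecutivePair.

Theorem corollary3p2 (k m : nat) :
  2 <= k -> 3 * k + 8 <= m -> m = k %[mod 2] ->
  let a := (3 * m + k) %/ 2 in
  W0 [:: m; a; a.+1] (4 * m) = (-1)%R.
Proof.
move=> k_ge2 m_ge parity a.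
have twice_a : a * 2 = 3 * m + k by rewrite /a; lia.
exact: W0_gens twice_a k_ge2 m_ge.
Qed.
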